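(* Let $N\ge1$ and let $\mathbf s$ be the algebra anti-automorphism of $\mathcal H^N$ determined by $\mathbf s(Y_u^i)=Y_{u^*}^i$. Then $m^{op}=\mathbf s\circ m\circ(\mathbf s\otimes\mathbf s)$, $\Delta=(\mathbf s\otimes\mathbf s)\circ\Delta\circ\mathbf s$, and $S_{\mathcal L}=\mathbf s\,S_{\mathcal H}\,\mathbf s$.
   Context: Let $\langle N\rangle=\{1,\dots,N\}$; for a word $u=u(1)\cdots u(p)$ let $|u|=p$ and $u^*=u(p)\cdots u(1)$. $\mathcal H=\mathcal H^N$ is, as an algebra (multiplication $m$), the free unital associative complex algebra on generators $Y_u^i$ ($i\in\langle N\rangle$, $|u|\ge2$); set $Y_j^i=\delta_{ij}1$ for letters. Counit: the algebra homomorphism $\varepsilon$ with $\varepsilon(Y_u^i)=0$. Comultiplication: the algebra homomorphism $\Delta$ with $\Delta(Y_u^i)=\sum_{q=1}^{p}\sum_{(C_1,\dots,C_q)}\sum_{v\in\langle N\rangle^q} Y_{u|C_1}^{v(1)}\cdots Y_{u|C_q}^{v(q)}\otimes Y_v^i$ ($p=|u|$, the middle sum over all partitions of $\{1,\dots,p\}$ into nonempty consecutive intervals $C_1<\dots<C_q$, $u|C_k$ the subword indexed by $C_k$). $S_{\mathcal H}$ is its (invertible) antipode. $m^{op}=m\circ\tau$, $\tau$ the flip. The anti-automorphism $\mathbf s$ acts by $\mathbf s(Y_{u_1}^{i_1}\cdots Y_{u_n}^{i_n})=Y_{u_n^*}^{i_n}\cdots Y_{u_1^*}^{i_1}$. $S_{\mathcal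 L}=S_{\mathcal H}^{-1}$ is the antipode of the left Lagrange Hopf algebra $(\mathcal H,m,\tau\circ\Delta,\varepsilon)$. *)

(* The free algebra H^N is modelled as the monoid algebra
   {malg algC[{fmonom gen N}]} (multinomials' monalg) over the free monoid on
   the generators Y_u^i (i in <N>, |u| >= 2), with complex (algebraic) scalars.
   H (x) H is modelled as the monoid algebra over the product monoid
   fmonom * fmonom, i.e. the vector space with basis (m1 (x) m2) for pairs of
   monomials, with componentwise multiplication. *)
From HB Require Import structures.
From mathcomp Require Import all_boot all_order all_algebra all_field.
From mathcomp Require Import finmap.
From mathcomp.multinomials Require Import monalg.

Set Implicit Arguments.
Unset Strict Implicit.
Unset Printing Implicit Defensive.

Import GRing.Theory.
Local Open Scope ring_scope.

Section Pair.
Variable I : choiceType.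

Definition fm2 := (fmonom I * fmonom I)%type.
HB.instance Definition _ := Choice.on fm2.

Definition fm2one : fm2 := (@mone (fmonom I), @mone (fmonom I)).
Definition fm2mul (a b : fm2) : fm2 := (mmul a.1 b.1, mmul a.2 b.2).

Lemma fm2mulA : associative fm2mul.
Proof. by move=> a b c; rewrite /fm2mul /= !mulmA. Qed.
Lemma fm2mul1m : left_id fm2one fm2mul.
Proof. by case=> a b; rewrite /fm2mul /= !mul1m. Qed.
Lemma fm2mulm1 : right_id fm2one fm2mul.
Proof. by case=> a b; rewrite /fm2mul /= !mulm1. Qed.
Lemma fm2mul_eq1 a b : fm2mul a b = fm2one -> a = fm2one /\ b = fm2one.
Proof.
case: a b => [a1 a2] [b1 b2] [] /unitm [-> ->] /unitm [-> ->]; by [].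
Qed.

HB.instance Definition _ :=
  Choice_isMonomialDef.Build fm2 fm2mulA fm2mul1m fm2mulm1 fm2mul_eq1.
End Pair.

(* a generator Y_u^i is a pair (i, u) with |u| >= 2 *)
Definition gen (N : nat) := {p : 'I_N * seq 'I_N | (1 < size p.2)%N}.

Definition Halg (N : nat) := {malg algC[{fmonom gen N}]}.
Definition H2alg (N : nat) := {malg algC[fm2 (gen N)]}.

Section Hopf.
Variable N : nat.
Local Notation H := (Halg N).
Local Notation H2 := (H2alg N).

Definition mon (m : {fmonom gen N}) : H := << m >>.

(* Y_u^i : the generator if |u| >= 2, delta_{ij} 1 if u = j is a letter;
   (the empty word never occurs below; we set it to 0) *)
Definition Y (u : seq 'I_N) (i : 'I_N) : H :=
  match insub ((i, u) : 'I_N * seq 'I_N) with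
  | Some g => mon (fmu g)
  | None => if u is [:: j] then (i == j)%:R else 0
  end.

Definition tens (a b : H) : H2 :=
  \sum_(m1 <- msupp a) \sum_(m2 <- msupp b)
     << a@_m1 * b@_m2 *g ((m1, m2) : fm2 (gen N)) >>.

Definition tmap (f g : H -> H) (t : H2) : H2 :=
  \sum_(p <- msupp t) t@_p *: tens (f (mon p.1)) (g (mon p.2)).

Definition mult (t : H2) : H :=
  \sum_(p <- msupp t) t@_p *: (mon p.1 * mon p.2).
Definition flip (t : H2) : H2 :=
  \sum_(p <- msupp t) << t@_p *g ((p.2, p.1) : fm2 (gen N)) >>.
Definition mult_op (t : H2) : H := mult (flip t).

(* all partitions of a word into nonempty consecutive blocks
   (u|C_1, ..., u|C_q), listed once each *)
Fixpoint blocks (T : Type) (u : seq T) : seq (seq (seq T)) :=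
  match u with
  | [::] => [:: [::]]
  | x :: u' =>
      flatten [seq (match s with
                    | [::] => [:: [:: [:: x]]]
                    | b :: s' => [:: [:: x] :: s; (x :: b) :: s']
                    end) | s <- blocks u']
  end.

Definition DeltaY (u : seq 'I_N) (i : 'I_N) : H2 :=
  \sum_(C <- blocks u) \sum_(v : (size C).-tuple 'I_N)
     tens (\prod_(k < size C) Y (nth [::] C k) (tnth v k)) (Y v i).

Definition Delta (x : H) : H2 :=
  \sum_(m <- msupp x)
     x@_m *: \prod_(g <- (m : seq (gen N))) DeltaY (val g).2 (val g).1.

Definition Delta_cop (x : H) : H2 := flip (Delta x).

(* counit : the algebra morphism with eps(Y_u^i) = 0, i.e. the coefficient of
   the empty monomial *)
Definition eps (x : H) : algC := x@_(@mone (fmonom (gen N))).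

Definition santi (x : H) : H :=
  \sum_(m <- msupp x)
     x@_m *: \prod_(g <- rev (m : seq (gen N))) Y (rev (val g).2) (val g).1.

Definition is_antipode (D : H -> H2) (S : H -> H) : Prop :=
  (forall (a : algC) (x y : H), S (a *: x + y) = a *: S x + S y) /\
  (forall x : H, mult (tmap S id (D x)) = (eps x)%:MP) /\
  (forall x : H, mult (tmap id S (D x)) = (eps x)%:MP).

End Hopf.

(* The map s comes from the involutive anti-automorphism
   Y_{u_1}^{i_1} ... Y_{u_n}^{i_n} |-> Y_{u_n^*}^{i_n} ... Y_{u_1^*}^{i_1}
   of the free monoid on the generators, and s (x) s from its componentwise
   extension to pairs of words; both are involutive anti-morphisms of monoid
   algebras, so the first identity is a check on basis elements.  For the
   second, Delta is multiplicative while s and s (x) s reverse products, so it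
   suffices to compare both sides on generators, where it holds because
   mirroring an interval partition of u (reversing the order of the blocks and
   each block) is a bijection onto the interval partitions of u^*.
   For the third, T = s S_H s is a left antipode for tau o Delta by the first
   two identities.  Left antipodes of tau o Delta are unique even without
   coassociativity: grading Y_u^i by |u| - 1, Delta(w) = 1 (x) w + terms whose
   right factor has lower degree, so m (S (x) id) tau Delta (w) = eps(w)
   determines S(w) by induction on the degree. *)

From HB Require Import structures.
From mathcomp Require Import all_boot all_order all_algebra all_field.
From mathcomp Require Import finmap.
From mathcomp.multinomials Require Import monalg.
From mathcomp Require Import zify.

Set Implicit Arguments.
Unset Strict Implicit.
Unset Printing Implicit Defensive.
Import GRing.Theory.

Lemma uniq_flatten_map (S T : eqType) (f : S -> seq T) (g : T -> S) s :
  uniq s -> {in s, forall x, uniq (f x) /\ {in f x, forall y, g y = x}} ->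
  uniq (flatten (map f s)).
Proof.
elim: s => [|x s IHs] //= /andP[xs us] fg.
have [ufx gfx] := fg x (mem_head x s).
have ufs : uniq (flatten (map f s)).
  by apply: IHs => // y ys; apply: fg; rewrite inE ys orbT.
rewrite cat_uniq ufx ufs andbT /=; apply/hasPn => y /flatten_mapP[x' x's yfx'].
apply/negP => yfx; have [_ gfx'] := fg x' (mem_behead (s := x :: s) x's).
by move: xs; rewrite -(gfx y yfx) (gfx' y yfx') x's.
Qed.

Lemma zip_mapl (S T U : Type) (f : S -> U) (s : seq S) (t : seq T) :
  zip (map f s) t = [seq (f p.1, p.2) | p <- zip s t].
Proof. by elim: s t => [|x s IHs] [|y t] //=; rewrite IHs. Qed.

Lemma big_ord_zip (R : Type) (idx : R) (op : R -> R -> R) (S T : Type) (x0 : S)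
    (s : seq S) q (v : q.-tuple T) (F : S -> T -> R) : size s = q ->
  \big[op/idx]_(k < q) F (nth x0 s k) (tnth v k) =
  \big[op/idx]_(p <- zip s v) F p.1 p.2.
Proof.
case: q v => [|q] v sz_s; first by rewrite big_ord0 (size0nil sz_s) tuple0 big_nil.
rewrite (big_nth (x0, tnth v ord0)) size_zip size_tuple sz_s minnn big_mkord.
by apply: eq_bigr => k _; rewrite nth_zip ?size_tuple // (tnth_nth (tnth v ord0)).
Qed.

Lemma rev_tupleK (T : Type) q : involutive (@rev_tuple q T).
Proof. by move=> v; apply: val_inj; rewrite /= revK. Qed.

Section Blocks.
Variable T : eqType.
Implicit Types (u : seq T) (C : seq (seq T)).

Definition blocks_step (x : T) C : seq (seq (seq T)) :=
  match C with
  | [::] => [:: [:: [:: x]]]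
  | c :: C' => [:: [:: x] :: C; (x :: c) :: C']
  end.

Lemma blocks_cons x u :
  blocks (x :: u) = flatten [seq blocks_step x C | C <- blocks u].
Proof. by []. Qed.

Lemma mem_blocks u C : (C \in blocks u) = (flatten C == u) && ([::] \notin C).
Proof.
elim: u C => [|x u IHu] C.
  by rewrite inE; case: C => [|[|y c] C]; rewrite //= ?inE ?eqxx ?andbF.
rewrite blocks_cons; apply/flatten_mapP/andP => [[C']|[/eqP eqC]].
  rewrite IHu => /andP[/eqP <-].
  case: C' => [|c C'] /=; first by rewrite inE => _ /eqP ->.
  rewrite !inE negb_or => /andP[nc nC'] /orP[] /eqP -> /=;
  by rewrite eqxx !inE /= ?(negbTE nc) (negbTE nC').
case: C eqC => [|[|y [|z c]] C] //= [<- eqC]; rewrite !inE ?negb_or.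
- move=> nC; case: C eqC nC => [|c C] /= eqC.
    by exists [::]; rewrite ?IHu -?eqC ?inE.
  by move=> nC; exists (c :: C); rewrite ?IHu /= ?eqC ?inE ?eqxx ?nC.
- move=> nC; exists ((z :: c) :: C); last by rewrite !inE eqxx orbT.
  by rewrite IHu /= eqC eqxx inE.
Qed.

Definition blocks_unstep C : seq (seq T) :=
  match C with
  | [::] => [::]
  | c :: C' => if c is [:: _] then C' else behead c :: C'
  end.

Lemma blocks_stepK x C : [::] \notin C ->
  uniq (blocks_step x C) /\ {in blocks_step x C, forall D, blocks_unstep D = C}.
Proof.
case: C => [|c C]; first by split=> // D; rewrite inE => /eqP ->.
rewrite inE negb_or => /andP[nc _]; split.
  by rewrite /= inE andbT; apply/eqP => -[]; case: c nc.
by move=> D; rewrite !inE => /orP[] /eqP -> //=; case: c nc => [|y [|z c]].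
Qed.

Lemma uniq_blocks u : uniq (blocks u).
Proof.
elim: u => [|x u IHu] //; rewrite blocks_cons.
apply: (uniq_flatten_map (g := blocks_unstep) IHu) => C.
by rewrite mem_blocks => /andP[_ /blocks_stepK].
Qed.

Definition mirror C := rev (map rev C).

Lemma mirrorK : involutive mirror.
Proof.
by move=> C; rewrite /mirror map_rev revK -map_comp (eq_map revK) map_id.
Qed.

Lemma size_mirror C : size (mirror C) = size C.
Proof. by rewrite size_rev size_map. Qed.

Lemma blocks_rev u : perm_eq (blocks (rev u)) (map mirror (blocks u)).
Proof.
apply: uniq_perm; rewrite ?(map_inj_uniq (can_inj mirrorK)) ?uniq_blocks //.
move=> C; rewrite -[in RHS](mirrorK C) (mem_map (can_inj mirrorK)) !mem_blocks.
rewrite /mirror mem_rev (mem_map (can_inj (@revK T)) C [::]) -rev_flatten.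
by rewrite (can2_eq (@revK T) (@revK T)).
Qed.

Lemma singletons_blocks u : [seq [:: x] | x <- u] \in blocks u.
Proof. by rewrite mem_blocks flatten_map1 map_id eqxx; apply/mapP => -[]. Qed.

Lemma size_blocks_le u C : C \in blocks u -> size C <= size u.
Proof.
rewrite mem_blocks => /andP[/eqP <-]; elim: C => //= c C IHC.
rewrite inE negb_or size_cat => /andP[nc /IHC]; case: c nc => //= y c _; lia.
Qed.

Lemma size_blocks_lt u C : C \in blocks u -> C != [seq [:: x] | x <- u] ->
  size C < size u.
Proof.
rewrite mem_blocks => /andP[/eqP <- nC]; elim: C nC => //= c C IHC.
rewrite inE negb_or size_cat => /andP[nc nC].
case: c nc => [|y [|z c]] //= _.
  by rewrite eqseq_cons eqxx => /IHC; apply.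
have := @size_blocks_le (flatten C) C; rewrite mem_blocks eqxx nC => /(_ isT).
lia.
Qed.

End Blocks.

Local Open Scope fset_scope.
Local Open Scope ring_scope.

Section MalgLinear.
Variables (R : nzRingType) (K : choiceType) (V : lmodType R).
Implicit Types (x : {malg R[K]}) (F : K -> V).

Lemma malgUZ c k : << c *g k >> = c *: << k >> :> {malg R[K]}.
Proof. by apply/malgP => l; rewrite mcoeffZ !mcoeffU mulr_natr. Qed.

Definition malg_lift F x : V := \sum_(k <- msupp x) x@_k *: F k.

Lemma malg_liftEw F x (d : {fset K}) : msupp x `<=` d ->
  malg_lift F x = \sum_(k <- d) x@_k *: F k.
Proof.
move=> le_xd; rewrite /malg_lift (big_fset_incl _ le_xd) // => k _.
by move/mcoeff_outdom ->; rewrite scale0r.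
Qed.

Lemma malg_lift_is_linear F : linear (malg_lift F).
Proof.
move=> a x y; set d := msupp x `|` msupp y.
have le_d : msupp (a *: x + y) `<=` d.
  apply: fsubset_trans (msuppD_le _ _) _.
  by apply: fsetUSS => //; apply: msuppZ_le.
rewrite (malg_liftEw _ le_d) (@malg_liftEw _ x d) ?fsubsetUl //.
rewrite (@malg_liftEw _ y d) ?fsubsetUr // scaler_sumr -big_split /=.
by apply: eq_bigr => k _; rewrite mcoeffD mcoeffZ scalerDl scalerA.
Qed.

HB.instance Definition _ F :=
  GRing.isLinear.Build R {malg R[K]} V *:%R (malg_lift F) (malg_lift_is_linear F).

Lemma malg_liftU F c k : malg_lift F << c *g k >> = c *: F k.
Proof. by rewrite (malg_liftEw _ msuppU_le) big_seq_fset1 mcoeffUU. Qed.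

Lemma malg_lift1 F k : malg_lift F << k >> = F k.
Proof. by rewrite malg_liftU scale1r. Qed.

Lemma linear_malgE (f : {malg R[K]} -> V) : linear f ->
  f =1 malg_lift (fun k => f << k >>).
Proof.
move=> f_lin x.
pose fL : {linear {malg R[K]} -> V} := HB.pack f (GRing.isLinear.Build _ _ _ _ f f_lin).
have -> : f x = fL x by [].
rewrite [in fL x](monalgE x) linear_sum; apply: eq_bigr => k _.
by rewrite malgUZ linearZ.
Qed.

Lemma linear_malg_ext (f g : {malg R[K]} -> V) : linear f -> linear g ->
  (forall k, f << k >> = g << k >>) -> f =1 g.
Proof.
move=> f_lin g_lin fg x; rewrite (linear_malgE f_lin) (linear_malgE g_lin).
by apply: eq_bigr => k _; rewrite fg.
Qed.

End MalgLinear.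

Lemma malg_liftDZ (R : comNzRingType) (K : choiceType) (V : lmodType R) a
    (F1 F2 : K -> V) (x : {malg R[K]}) :
  malg_lift (fun k => a *: F1 k + F2 k) x = a *: malg_lift F1 x + malg_lift F2 x.
Proof.
rewrite /malg_lift scaler_sumr -big_split; apply: eq_bigr => k _.
by rewrite scalerDr !scalerA mulrC.
Qed.

Section MalgAntimorphism.
Variables (R : comNzRingType) (K : monomType).
Implicit Types (x y : {malg R[K]}) (k : K).

Lemma malgUM k1 k2 : << k1 >> * << k2 >> = << mmul k1 k2 >> :> {malg R[K]}.
Proof. by rewrite malgM_def fgmulUU mulr1. Qed.

Lemma malg_scalerAr a x y : x * (a *: y) = a *: (x * y).
Proof.
apply/malgP => k; rewrite mcoeffZ.
rewrite (mcoeffMlw _ (fsubset_refl _) (msuppZ_le _ _)) mcoeffMl mulr_sumr.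
apply: eq_bigr => k1 _; rewrite mulr_sumr; apply: eq_bigr => k2 _.
by rewrite mcoeffZ mulrCA mulrnAr.
Qed.

Variable sg : K -> K.
Hypothesis sgM : forall k1 k2, sg (mmul k1 k2) = mmul (sg k2) (sg k1).
Hypothesis sg1 : sg mone = mone.

Definition malg_antimorph := malg_lift (fun k => << sg k >> : {malg R[K]}).

Lemma malg_antimorph_is_linear : linear malg_antimorph.
Proof. exact: malg_lift_is_linear. Qed.

Lemma malg_antimorphU k : malg_antimorph << k >> = << sg k >>.
Proof. exact: malg_lift1. Qed.

Lemma malg_antimorph1 : malg_antimorph 1 = 1.
Proof. by rewrite malg_antimorphU sg1. Qed.

Lemma malg_antimorphM x y :
  malg_antimorph (x * y) = malg_antimorph y * malg_antimorph x.
Proof.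
move: x; apply: linear_malg_ext => [a x1 x2|a x1 x2|k].
- by rewrite mulrDl -scalerAl malg_antimorph_is_linear.
- by rewrite malg_antimorph_is_linear mulrDr malg_scalerAr.
move: y; apply: linear_malg_ext => [a y1 y2|a y1 y2|l].
- by rewrite mulrDr malg_scalerAr malg_antimorph_is_linear.
- by rewrite malg_antimorph_is_linear mulrDl -scalerAl.
by rewrite malgUM !malg_antimorphU malgUM sgM.
Qed.

Lemma malg_antimorph_prod (I : Type) (r : seq I) (F : I -> {malg R[K]}) :
  malg_antimorph (\prod_(i <- r) F i) = \prod_(i <- rev r) malg_antimorph (F i).
Proof.
elim: r => [|i r IHr]; first by rewrite !big_nil malg_antimorph1.
by rewrite big_cons malg_antimorphM IHr rev_cons -cats1 big_cat big_seq1.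
Qed.

End MalgAntimorphism.

Section Reversal.
Variable N : nat.
Local Notation G := (gen N).
Local Notation M := {fmonom G}.
Local Notation H := (Halg N).
Local Notation H2 := (H2alg N).
Local Notation santi2 := (tmap (@santi N) (@santi N)).
Implicit Types (g : G) (m : M) (p : fm2 G) (x y : H) (t : H2).

Fact star_subproof g : (1 < size (rev (val g).2))%N.
Proof. by rewrite size_rev; apply: (valP g). Qed.

Definition star g : G := Sub ((val g).1, rev (val g).2) (star_subproof g).

Lemma starK : involutive star.
Proof. by move=> g; apply: val_inj; rewrite /= revK; case: (val g). Qed.

Definition mstar m : M := FMonom (map star (rev m)).

Lemma mstarM m1 m2 : mstar (mmul m1 m2) = mmul (mstar m2) (mstar m1).
Proof. by apply: val_inj; rewrite /= !fmM rev_cat map_cat. Qed.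

Lemma mstar1 : mstar mone = mone.
Proof. by apply: val_inj; rewrite /= fm1. Qed.

Lemma mstarK : involutive mstar.
Proof.
by move=> m; apply: val_inj; rewrite /= -map_rev revK -map_comp (eq_map starK) map_id.
Qed.

Definition mstar2 p : fm2 G := (mstar p.1, mstar p.2).

Lemma mstar2M p1 p2 : mstar2 (mmul p1 p2) = mmul (mstar2 p2) (mstar2 p1).
Proof. by rewrite /mstar2 /= !mstarM. Qed.

Lemma mstar2_1 : mstar2 mone = mone.
Proof. by rewrite /mstar2 /= mstar1. Qed.

Lemma Y_gen g : Y (val g).2 (val g).1 = << fmu g >>.
Proof.
rewrite /Y; case: insubP => [g' _ eq_g'|]; last by rewrite (valP g).
by congr << fmu _ >>; apply: val_inj; rewrite eq_g'; case: (val g).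
Qed.

Lemma prod_fmu (I : Type) (r : seq I) (f : I -> G) :
  \prod_(i <- r) (<< fmu (f i) >> : H) = << FMonom (map f r) >>.
Proof.
elim: r => [|i r IHr].
  rewrite big_nil -[LHS]/(<< mone >> : H); congr << _ >>.
  by apply: val_inj; rewrite /= fm1.
by rewrite big_cons IHr malgUM; congr << _ >>; apply: val_inj; rewrite /= fmM fmU.
Qed.

Lemma santi_is_linear : linear (@santi N).
Proof. exact: malg_lift_is_linear. Qed.

HB.instance Definition _ :=
  GRing.isLinear.Build algC H H *:%R (@santi N) santi_is_linear.

Lemma santiE x : santi x = malg_antimorph mstar x.
Proof.
apply: eq_bigr => m _; congr (_ *: _).
by rewrite -prod_fmu; apply: eq_bigr => g _; rewrite -Y_gen.
Qed.

Lemma santiU m : santi << m >> = << mstar m >>.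
Proof. by rewrite santiE malg_antimorphU. Qed.

Lemma santi1 : santi 1 = 1 :> H.
Proof. by rewrite santiE (malg_antimorph1 _ mstar1). Qed.

Lemma santiM x y : santi (x * y) = santi y * santi x.
Proof. by rewrite !santiE (malg_antimorphM mstarM). Qed.

Lemma santi_prod (I : Type) (r : seq I) (F : I -> H) :
  santi (\prod_(i <- r) F i) = \prod_(i <- rev r) santi (F i).
Proof.
rewrite santiE (malg_antimorph_prod mstarM mstar1).
by apply: eq_bigr => i _; rewrite santiE.
Qed.

Lemma santiK : involutive (@santi N).
Proof.
apply: linear_malg_ext => [a x y|a x y|m].
- by rewrite !santi_is_linear.
- by [].
by rewrite !santiU mstarK.
Qed.

Lemma santi_Y (w : seq 'I_N) j : santi (Y w j) = Y (rev w) j.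
Proof.
have [w_gt1|w_le1] := ltnP 1 (size w).
  pose g : G := Sub (j, w) w_gt1.
  rewrite -[Y w j]/(Y (val g).2 (val g).1) Y_gen santiU.
  rewrite -[Y (rev w) j]/(Y (val (star g)).2 (val (star g)).1) Y_gen.
  by congr << _ >>; apply: val_inj; rewrite /= !fmU.
rewrite /Y !insubF /= ?size_rev ?ltnNge ?w_le1 //.
case: w w_le1 => [|a [|b w]] //= _; first exact: linear0.
by case: (j == a); rewrite ?linear0 ?santi1.
Qed.

Lemma santiC c : santi c%:MP = c%:MP :> H.
Proof. by rewrite santiE /malg_antimorph malg_liftU mstar1 -malgUZ. Qed.

Lemma eps_santiU m : eps (santi << m >>) = eps << m >>.
Proof.
by rewrite santiU /eps mcoeffU1 (can2_eq mstarK mstarK) mstar1 mcoeffU1.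
Qed.

Lemma tensE x y :
  tens x y = malg_lift (fun m1 => malg_lift (fun m2 => << (m1, m2) : fm2 G >>) y) x.
Proof.
apply: eq_bigr => m1 _; rewrite scaler_sumr; apply: eq_bigr => m2 _.
by rewrite malgUZ scalerA.
Qed.

Lemma tens_is_linearl y : linear ((@tens N)^~ y).
Proof. by move=> a x1 x2; rewrite !tensE malg_lift_is_linear. Qed.

Lemma tens_is_linearr x : linear (tens x).
Proof.
move=> a y1 y2; rewrite !tensE -malg_liftDZ.
by apply: eq_bigr => m1 _; rewrite malg_lift_is_linear.
Qed.

Lemma tensU m1 m2 : tens << m1 >> << m2 >> = << (m1, m2) : fm2 G >>.
Proof. by rewrite tensE !malg_lift1. Qed.

Lemma tens0l y : tens 0 y = 0.
Proof. by rewrite tensE linear0. Qed.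

Lemma tmap_is_linear (f g : H -> H) : linear (tmap f g).
Proof. exact: malg_lift_is_linear. Qed.

HB.instance Definition _ (f g : H -> H) :=
  GRing.isLinear.Build algC H2 H2 *:%R (tmap f g) (tmap_is_linear f g).

Lemma tmapU (f g : H -> H) p : tmap f g << p >> = tens (f << p.1 >>) (g << p.2 >>).
Proof. exact: malg_lift1. Qed.

Lemma mult_is_linear : linear (@mult N).
Proof. exact: malg_lift_is_linear. Qed.

Lemma multU p : mult << p >> = << p.1 >> * << p.2 >>.
Proof. exact: malg_lift1. Qed.

Lemma mult_tens x y : mult (tens x y) = x * y.
Proof.
move: x; apply: linear_malg_ext => [a x1 x2|a x1 x2|m1].
- by rewrite tens_is_linearl mult_is_linear.
- by rewrite mulrDl -scalerAl.
move: y; apply: linear_malg_ext => [a y1 y2|a y1 y2|m2].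
- by rewrite tens_is_linearr mult_is_linear.
- by rewrite mulrDr malg_scalerAr.
by rewrite tensU multU.
Qed.

Lemma flipE t : flip t = malg_lift (fun p => << (p.2, p.1) : fm2 G >>) t.
Proof. by apply: eq_bigr => p _; rewrite malgUZ. Qed.

Lemma flip_is_linear : linear (@flip N).
Proof. by move=> a s t; rewrite !flipE malg_lift_is_linear. Qed.

Lemma flipU p : flip << p >> = << (p.2, p.1) : fm2 G >>.
Proof. by rewrite flipE malg_lift1. Qed.

Lemma santi2E t : santi2 t = malg_antimorph mstar2 t.
Proof. by apply: eq_bigr => p _; rewrite /mon santiU (santiU p.2) tensU. Qed.

Lemma santi2U p : santi2 << p >> = << mstar2 p >>.
Proof. by rewrite santi2E malg_antimorphU. Qed.

Lemma santi2_prod (I : Type) (r : seq I) (F : I -> H2) :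
  santi2 (\prod_(i <- r) F i) = \prod_(i <- rev r) santi2 (F i).
Proof.
rewrite santi2E (malg_antimorph_prod mstar2M mstar2_1).
by apply: eq_bigr => i _; rewrite santi2E.
Qed.

Lemma santi2_tens x y : santi2 (tens x y) = tens (santi x) (santi y).
Proof.
move: x; apply: linear_malg_ext => [a x1 x2|a x1 x2|m1].
- by rewrite tens_is_linearl tmap_is_linear.
- by rewrite santi_is_linear tens_is_linearl.
move: y; apply: linear_malg_ext => [a y1 y2|a y1 y2|m2].
- by rewrite tens_is_linearr tmap_is_linear.
- by rewrite santi_is_linear tens_is_linearr.
by rewrite tensU santi2U santiU (santiU m2) tensU.
Qed.

Lemma santi_mult_tens x y : santi (mult (tens (santi x) (santi y))) = y * x.
Proof. by rewrite mult_tens santiM; congr (_ * _); apply: santiK. Qed.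

Lemma mult_op_santi t : mult_op t = santi (mult (santi2 t)).
Proof.
move: t; apply: linear_malg_ext => [a s t|a s t|p].
- by rewrite /mult_op flip_is_linear mult_is_linear.
- by rewrite tmap_is_linear mult_is_linear santi_is_linear.
by rewrite /mult_op flipU multU tmapU santi_mult_tens.
Qed.

Definition Yprod (C : seq (seq 'I_N)) (v : seq 'I_N) : H :=
  \prod_(p <- zip C v) Y p.1 p.2.

(* The length q of the letter tuples is kept apart from C so that it can be
   rewritten independently of C, e.g. along size_mirror. *)
Definition DeltaY_part i C q : H2 :=
  \sum_(v : q.-tuple 'I_N) tens (Yprod C v) (Y v i).

Lemma DeltaYE u i : DeltaY u i = \sum_(C <- blocks u) DeltaY_part i C (size C).
Proof.
by apply: eq_bigr => C _; apply: eq_bigr => v _; rewrite (big_ord_zip _ _ [::]).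
Qed.

Lemma santi_Yprod C v : size C = size v ->
  santi (Yprod C v) = Yprod (mirror C) (rev v).
Proof.
move=> szC; rewrite santi_prod rev_zip // /Yprod /mirror -map_rev zip_mapl big_map.
by apply: eq_bigr => p _; rewrite santi_Y.
Qed.

Lemma santi2_DeltaY_part i C q : size C = q ->
  santi2 (DeltaY_part i (mirror C) q) = DeltaY_part i C q.
Proof.
move=> szC; rewrite linear_sum (reindex_inj (inv_inj (@rev_tupleK _ q))) /=.
apply: eq_bigr => v _; rewrite santi2_tens santi_Y revK santi_Yprod.
  by rewrite mirrorK revK.
by rewrite size_mirror size_rev size_tuple.
Qed.

Lemma santi2_DeltaY_rev u i : santi2 (DeltaY (rev u) i) = DeltaY u i.
Proof.
rewrite !DeltaYE linear_sum (perm_big _ (blocks_rev u)) big_map.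
by apply: eq_bigr => C _ /=; rewrite size_mirror santi2_DeltaY_part.
Qed.

Lemma Delta_is_linear : linear (@Delta N).
Proof. exact: malg_lift_is_linear. Qed.

Lemma DeltaU m : Delta << m >> = \prod_(g <- (m : seq G)) DeltaY (val g).2 (val g).1.
Proof. exact: malg_lift1. Qed.

Lemma Delta_santi x : Delta x = santi2 (Delta (santi x)).
Proof.
move: x; apply: linear_malg_ext => [a x1 x2|a x1 x2|m].
- exact: Delta_is_linear.
- by rewrite santi_is_linear Delta_is_linear tmap_is_linear.
rewrite santiU DeltaU santi2_prod DeltaU /= -map_rev revK big_map.
by apply: eq_bigr => g _; rewrite santi2_DeltaY_rev.
Qed.

End Reversal.

Section LeftAntipode.
Variable N : nat.
Local Notation G := (gen N).
Local Notation M := {fmonom G}.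
Local Notation H := (Halg N).
Local Notation H2 := (H2alg N).
Local Notation santi2 := (tmap (@santi N) (@santi N)).
Implicit Types (g : G) (m : M) (p : fm2 G) (x y : H) (s t : H2).

Definition deg m : nat := \sum_(g <- (m : seq G)) (size (val g).2).-1.

Lemma degM m1 m2 : deg (mmul m1 m2) = (deg m1 + deg m2)%N.
Proof. by rewrite /deg fmM big_cat. Qed.

Lemma deg_fmu g : deg (fmu g) = (size (val g).2).-1.
Proof. by rewrite /deg fmU big_seq1. Qed.

Definition rdeg_lt d t := {in msupp t, forall p, deg p.2 < d}%N.

Lemma rdeg_lt0 d : rdeg_lt d 0.
Proof. by move=> p; rewrite msupp0. Qed.

Lemma rdeg_ltD d s t : rdeg_lt d s -> rdeg_lt d t -> rdeg_lt d (s + t).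
Proof. by move=> hs ht p /(fsubsetP (msuppD_le _ _)); rewrite inE => /orP[/hs|/ht]. Qed.

Lemma rdeg_lt_sum d (I : Type) (r : seq I) (P : pred I) (F : I -> H2) :
  (forall i, P i -> rdeg_lt d (F i)) -> rdeg_lt d (\sum_(i <- r | P i) F i).
Proof. by move=> hF; apply: big_ind => //; [apply: rdeg_lt0 | apply: rdeg_ltD]. Qed.

Lemma rdeg_ltW d1 d2 t : (d1 <= d2)%N -> rdeg_lt d1 t -> rdeg_lt d2 t.
Proof. by move=> le_d ht p /ht /leq_trans; apply. Qed.

Lemma rdeg_ltM d1 d2 s t :
  rdeg_lt d1 s -> rdeg_lt d2 t -> rdeg_lt (d1 + d2).-1 (s * t).
Proof.
move=> hs ht p /msuppM_le[p1 [p2 [/hs lt1 /ht lt2 ->]]].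
by rewrite degM; move: lt1 lt2; lia.
Qed.

Lemma rdeg_ltU d c p : (deg p.2 < d)%N -> rdeg_lt d << c *g p >>.
Proof. by move=> lt_p q /(fsubsetP msuppU_le); rewrite inE => /eqP ->. Qed.

Lemma rdeg_lt_tens d x y :
  {in msupp y, forall m, deg m < d}%N -> rdeg_lt d (tens x y).
Proof.
move=> hy; apply: rdeg_lt_sum => m1 _; rewrite big_seq.
by apply: rdeg_lt_sum => m2 /hy lt_m2; apply: rdeg_ltU.
Qed.

Lemma Y_deg (w : seq 'I_N) j :
  {in msupp (Y w j), forall m, deg m <= (size w).-1}%N.
Proof.
rewrite /Y; case: insubP => [g _ eq_g m|].
  by rewrite /mon msuppU1 inE => /eqP ->; rewrite deg_fmu eq_g.
case: w => [|a [|b w]] //= _ m; first by rewrite msupp0.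
rewrite -mpolyC_nat => /(fsubsetP (msuppC_le _)); rewrite inE => /eqP ->.
by rewrite /deg fm1 big_nil.
Qed.

Lemma Yprod_singletons (u v : seq 'I_N) : size v = size u ->
  Yprod (map (fun a => [:: a]) u) v = (v == u)%:R.
Proof.
elim: u v => [|a u IHu] [|j v] //; first by rewrite /Yprod big_nil.
move=> [/IHu eq_v]; rewrite /Yprod big_cons -/(Yprod _ _) eq_v eqseq_cons.
by rewrite /Y insubF //=; case: (j == a); case: (v == u); rewrite ?mul1r ?mul0r.
Qed.

Lemma DeltaY_part_singletons g :
  DeltaY_part (val g).1 (map (fun a => [:: a]) (val g).2) (size (val g).2) =
  << (mone, fmu g) : fm2 G >>.
Proof.
rewrite /DeltaY_part (bigD1 (in_tuple (val g).2)) // big1 => [|v /eqP ne_v].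
  by rewrite /= addr0 Yprod_singletons ?size_tuple // eqxx mulr1n Y_gen tensU.
rewrite Yprod_singletons ?size_tuple //; case: eqP => [eq_v|_].
  by case: ne_v; apply: val_inj.
by rewrite mulr0n tens0l.
Qed.

Lemma DeltaY_lead g : exists2 R, rdeg_lt (deg (fmu g)) R &
  DeltaY (val g).2 (val g).1 = << (mone, fmu g) : fm2 G >> + R.
Proof.
pose C0 := map (fun a => [:: a]) (val g).2.
exists (\sum_(C <- blocks (val g).2 | C != C0) DeltaY_part (val g).1 C (size C)).
  rewrite big_seq_cond; apply: rdeg_lt_sum => C /andP[C_u ne_C].
  apply: rdeg_lt_sum => v _; apply: rdeg_lt_tens => m /Y_deg.
  have := size_blocks_lt C_u ne_C; have := valP g.
  rewrite size_tuple deg_fmu; move: (size C) (size (val g).2) (deg m) => c n d.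
  lia.
rewrite DeltaYE (bigD1_seq C0 (singletons_blocks _) (uniq_blocks _)).
by rewrite size_map DeltaY_part_singletons.
Qed.

Lemma Delta_lead m : exists2 R, rdeg_lt (deg m) R &
  Delta << m >> = << (mone, m) : fm2 G >> + R.
Proof.
case: m => r; rewrite DeltaU /=; elim: r => [|g r [R lt_R eq_r]].
  exists 0; first exact: rdeg_lt0.
  have -> : FMonom [::] = mone :> M by apply: val_inj; rewrite /= fm1.
  by rewrite big_nil addr0.
have [Rg lt_Rg eq_g] := DeltaY_lead g.
have deg_gr : deg (FMonom (g :: r)) = (deg (fmu g) + deg (FMonom r))%N.
  by rewrite deg_fmu /deg big_cons.
have mul_gr : mmul ((mone, fmu g) : fm2 G) (mone, FMonom r) = (mone, FMonom (g :: r)).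
  by congr pair; [exact: mul1m | apply: val_inj; rewrite /= fmM fmU].
have lead_gr : << (mone, fmu g) : fm2 G >> * << (mone, FMonom r) : fm2 G >> =
    << (mone, FMonom (g :: r)) : fm2 G >> :> H2 by rewrite malgUM mul_gr.
exists (<< (mone, fmu g) : fm2 G >> * R + Rg * (<< (mone, FMonom r) : fm2 G >> + R)).
  rewrite deg_gr; apply: rdeg_ltD.
    apply: (@rdeg_ltW ((deg (fmu g)).+1 + deg (FMonom r)).-1); first by rewrite addSn.
    by apply: rdeg_ltM lt_R; apply: rdeg_ltU; apply: ltnSn.
  apply: (@rdeg_ltW (deg (fmu g) + (deg (FMonom r)).+1).-1); first by rewrite addnS.
  apply: rdeg_ltM lt_Rg _; apply: rdeg_ltD; last exact: rdeg_ltW lt_R.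
  by apply: rdeg_ltU; apply: ltnSn.
by rewrite big_cons eq_g eq_r mulrDl mulrDr lead_gr -addrA.
Qed.

Definition conv_cop (S : H -> H) t : H := mult (tmap S id (flip t)).

Lemma conv_cop_is_linear S : linear (conv_cop S).
Proof.
by move=> a s t; rewrite /conv_cop flip_is_linear tmap_is_linear mult_is_linear.
Qed.

HB.instance Definition _ S :=
  GRing.isLinear.Build algC H2 H *:%R (conv_cop S) (conv_cop_is_linear S).

Lemma conv_copE S t : conv_cop S t = malg_lift (fun p => S << p.2 >> * << p.1 >>) t.
Proof.
move: t; apply: linear_malg_ext => [||p]; first exact: conv_cop_is_linear.
  exact: malg_lift_is_linear.
by rewrite malg_lift1 /conv_cop flipU tmapU mult_tens.
Qed.

Lemma conv_cop_lowdeg S T d t : rdeg_lt d t ->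
  (forall m, deg m < d -> S << m >> = T << m >>)%N -> conv_cop S t = conv_cop T t.
Proof.
move=> lt_t eq_ST; rewrite (conv_copE S) conv_copE.
by apply: eq_big_seq => p /lt_t /eq_ST ->.
Qed.

Lemma conv_cop_unique S T :
  (forall m, conv_cop S (Delta << m >>) = (eps << m >>)%:MP) ->
  (forall m, conv_cop T (Delta << m >>) = (eps << m >>)%:MP) ->
  forall m, S << m >> = T << m >>.
Proof.
move=> hS hT m; elim: {m}(deg m).+1 {-2}m (ltnSn (deg m)) => // n IHn m lt_mn.
have [R lt_R eq_D] := Delta_lead m.
have conv_cop_lead U : conv_cop U (Delta << m >>) = U << m >> + conv_cop U R.
  rewrite eq_D linearD /=; congr (_ + _).
  by rewrite conv_copE malg_lift1 /= mulr1.
apply: (addIr (conv_cop S R)); rewrite -conv_cop_lead hS.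
rewrite (conv_cop_lowdeg (T := T) lt_R) => [|k lt_k]; last by apply: IHn; lia.
by rewrite -conv_cop_lead hT.
Qed.

Lemma conv_cop_santi2 S t :
  conv_cop (fun x => santi (S (santi x))) (santi2 t) = santi (mult (tmap id S t)).
Proof.
move: t; apply: linear_malg_ext => [a s t|a s t|p].
- by rewrite tmap_is_linear conv_cop_is_linear.
- by rewrite tmap_is_linear mult_is_linear santi_is_linear.
rewrite santi2U conv_copE malg_lift1 /= santiU mstarK.
by rewrite tmapU mult_tens santiM santiU.
Qed.

Lemma antipode_cop_santi (SH SL : H -> H) :
  is_antipode (@Delta N) SH -> is_antipode (@Delta_cop N) SL ->
  forall x, SL x = santi (SH (santi x)).
Proof.
move=> [SH_lin [_ SH_right]] [SL_lin [SL_left _]].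
have T_lin : linear (fun x => santi (SH (santi x))).
  by move=> a x y; rewrite santi_is_linear SH_lin santi_is_linear.
apply: (linear_malg_ext SL_lin T_lin) => m.
apply: (conv_cop_unique (T := fun x => santi (SH (santi x)))) => {}m.
  exact: SL_left.
by rewrite Delta_santi conv_cop_santi2 SH_right santiC eps_santiU.
Qed.

End LeftAntipode.

Theorem lemma5 (N : nat) (hN : (0 < N)%N) :
  (forall t : H2alg N,
      mult_op t = santi (mult (tmap (@santi N) (@santi N) t))) /\
  (forall x : Halg N,
      Delta x = tmap (@santi N) (@santi N) (Delta (santi x))) /\
  (forall SH SL : Halg N -> Halg N,
      is_antipode (@Delta N) SH ->
      is_antipode (@Delta_cop N) SL ->
      forall x : Halg N, SL x = santi (SH (santi x))).
Proof.
split; first exact: mult_op_santi.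
split; first exact: Delta_santi.
exact: antipode_cop_santi.
Qed.
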